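(* Among all $4\times4$ unimodular zerofree matrices $M$, the minimum of $\|(M\;M^{-1})\|$ is $2$. It is attained by $$M=\begin{pmatrix}1&1&1&2\\1&1&2&1\\1&2&2&2\\2&1&2&2\end{pmatrix},\ M^{-1}=\begin{pmatrix}-2&-2&1&2\\-2&-2&2&1\\1&2&-1&-1\\2&1&-1&-1\end{pmatrix}$$ and by $$\tilde M=\begin{pmatrix}1&1&1&2\\-1&1&2&-1\\-2&1&2&-2\\1&2&2&2\end{pmatrix},\ \tilde M^{-1}=\begin{pmatrix}-2&2&-2&1\\-2&-2&1&2\\1&2&-1&-1\\2&-1&1&-1\end{pmatrix},$$ and $M$ and $\tilde M$ are not equivalent.
   Context: A square integer matrix is unimodular if its determinant is $\pm1$. An invertible matrix $Z$ is zerofree if none of the entries of $Z$ and none of the entries of $Z^{-1}$ is zero. For a matrix $A$, $\|A\|$ denotes the maximum of the absolute values of its entries. $(M\;M^{-1})$ denotes the $n\times 2n$ matrix obtained by concatenating $M$ and $M^{-1}$ side by side. Two $n\times n$ matrices $Z,Z'$ are equivalent if $Z'=PZQ$ for some $n\times n$ signed permutation matrices $P,Q$ (permutation matrices whose nonzero entries may be $\pm1$). *)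

From HB Require Import structures.
From mathcomp Require Import all_boot all_order all_algebra all_fingroup.
Set Implicit Arguments. Unset Strict Implicit. Unset Printing Implicit Defensive.
Import Order.TTheory GRing.Theory Num.Theory.
Local Open Scope ring_scope.

(* Integer matrices; over [int], [invmx] is the true inverse for unimodular M. *)

Definition unimodular (n : nat) (M : 'M[int]_n) : Prop :=
  \det M = 1 \/ \det M = -1.

Definition zerofree (n : nat) (Z : 'M[int]_n) : Prop :=
  Z \in unitmx /\ (forall i j, Z i j != 0) /\ (forall i j, invmx Z i j != 0).

Definition mxnorm (m n : nat) (A : 'M[int]_(m, n)) : nat :=
  (\max_(i < m) \max_(j < n) `|A i j|)%N.

Definition signed_perm_mx (n : nat) (P : 'M[int]_n) : Prop :=
  exists (s : 'S_n) (d : 'rV[int]_n),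
    (forall i, d 0 i = 1 \/ d 0 i = -1) /\ P = diag_mx d *m perm_mx s.

Definition mx_equiv (n : nat) (Z Z' : 'M[int]_n) : Prop :=
  exists P Q : 'M[int]_n, signed_perm_mx P /\ signed_perm_mx Q /\ Z' = P *m Z *m Q.

Definition mx4_of_list (l : seq (seq int)) : 'M[int]_4 :=
  \matrix_(i < 4, j < 4) nth 0 (nth [::] l i) j.

Definition Mex : 'M[int]_4 := mx4_of_list
  [:: [:: 1; 1; 1; 2]; [:: 1; 1; 2; 1]; [:: 1; 2; 2; 2]; [:: 2; 1; 2; 2]].
Definition Mex_inv : 'M[int]_4 := mx4_of_list
  [:: [:: -2; -2; 1; 2]; [:: -2; -2; 2; 1]; [:: 1; 2; -1; -1]; [:: 2; 1; -1; -1]].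
Definition Mtil : 'M[int]_4 := mx4_of_list
  [:: [:: 1; 1; 1; 2]; [:: -1; 1; 2; -1]; [:: -2; 1; 2; -2]; [:: 1; 2; 2; 2]].
Definition Mtil_inv : 'M[int]_4 := mx4_of_list
  [:: [:: -2; 2; -2; 1]; [:: -2; -2; 1; 2]; [:: 1; 2; -1; -1]; [:: 2; -1; 1; -1]].

(* If every entry of M and of M^-1 is +-1, then modulo 2 both are the all-ones
   matrix J, and the diagonal entries of J J are n = 0 in 'F_2 for even n,
   contradicting M M^-1 = 1.  For the inequivalence: under a signed
   permutation equivalence, the product of the four entries of a 2x2
   rectangle is multiplied by squares of signs, so its sign is an invariant;
   these products are all positive for Mex but equal -1 on the top-left
   rectangle of Mtil. *)

From HB Require Import structures.
From mathcomp Require Import all_boot all_order all_algebra all_fingroup.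
From mathcomp Require Import zify ring.
Set Implicit Arguments. Unset Strict Implicit. Unset Printing Implicit Defensive.
Import Order.TTheory GRing.Theory Num.Theory.
Local Open Scope ring_scope.

Lemma absz_le_mxnorm m n (A : 'M[int]_(m, n)) i j : (`|A i j| <= mxnorm A)%N.
Proof.
apply: leq_trans (leq_bigmax i).
exact: (leq_bigmax (F := fun j => `|A i j|%N)).
Qed.

Lemma mxnorm_leP m n (A : 'M[int]_(m, n)) k :
  reflect (forall i j, `|A i j| <= k)%N (mxnorm A <= k)%N.
Proof.
apply: (iffP idP) => [le_Ak i j | le_Ak].
  by apply: leq_trans le_Ak; apply: absz_le_mxnorm.
by apply/bigmax_leqP => i _; apply/bigmax_leqP => j _.
Qed.

Lemma mxnorm_eq m n (A : 'M[int]_(m, n)) k i0 j0 :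
  (forall i j, `|A i j| <= k)%N -> `|A i0 j0|%N = k -> mxnorm A = k.
Proof.
move=> le_Ak Ak; apply/eqP; rewrite eqn_leq -{2}Ak absz_le_mxnorm andbT.
exact/mxnorm_leP.
Qed.

Lemma mxnorm_row_mx m n1 n2 (A : 'M[int]_(m, n1)) (B : 'M[int]_(m, n2)) :
  mxnorm (row_mx A B) = maxn (mxnorm A) (mxnorm B).
Proof.
rewrite /mxnorm -big_split /=; apply: eq_bigr => i _.
by rewrite big_split_ord /=; congr maxn; apply: eq_bigr => j _;
  rewrite ?row_mxEl ?row_mxEr.
Qed.

Lemma intr_F2_unit (x : int) : x != 0 -> (`|x| <= 1)%N -> (x%:~R : 'F_2) = 1.
Proof.
move=> x_nz x_le1; have [->|->] : x = 1 \/ x = -1 by lia.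
  exact: rmorph1.
by rewrite rmorphN1; apply/eqP.
Qed.

Lemma natr_F2_even n : ~~ odd n -> (n%:R : 'F_2) = 0.
Proof. by rewrite -Fp_nat_mod // modn2 => /negbTE ->. Qed.

Lemma zerofree_mxnorm_ge2 n (M : 'M[int]_n) : (0 < n)%N -> ~~ odd n ->
  zerofree M -> (2 <= mxnorm (row_mx M (invmx M)))%N.
Proof.
move=> n_gt0 n_even [M_unit [M_nz Mi_nz]].
rewrite leqNgt ltnS mxnorm_row_mx geq_max.
apply/negP => /andP [/mxnorm_leP M_le1 /mxnorm_leP Mi_le1].
pose i := Ordinal n_gt0.
have := congr1 (fun A : 'M[int]_n => (A i i)%:~R : 'F_2) (mulmxV M_unit).
rewrite /= !mxE eqxx rmorph_sum /=.
under eq_bigr => k _ do rewrite rmorphM /= !intr_F2_unit // mulr1.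
by rewrite sumr_const card_ord natr_F2_even.
Qed.

Lemma mulmx1_invmx (R : comUnitRingType) n (A B : 'M[R]_n) :
  A *m B = 1%:M -> invmx A = B.
Proof.
move=> AB; have [A_unit _] := mulmx1_unit AB.
by rewrite -[invmx A]mulmx1 -AB mulmxA mulVmx // mul1mx.
Qed.

Lemma mulmx1_unimodular n (A B : 'M[int]_n) : A *m B = 1%:M -> unimodular A.
Proof.
move/(congr1 determinant); rewrite det_mulmx det1 /unimodular => detAB.
have /intUnitRing.unitzPl : \det B * \det A = 1 by rewrite mulrC.
by rewrite qualifE /= => /orP[]/eqP; [left|right].
Qed.

Lemma signed_perm_mulmxE (R : pzRingType) n (s t : 'S_n) (d e : 'rV[R]_n)
    (Z : 'M[R]_n) i j :
  (diag_mx d *m perm_mx s *m Z *m (diag_mx e *m perm_mx t)) i j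
  = d 0 i * Z (s i) (t^-1 j)%g * e 0 (t^-1 j)%g.
Proof.
have -> : perm_mx t = perm_mx (t^-1)^-1 :> 'M[R]_n by rewrite invgK.
rewrite mulmxA -col_permE mul_mx_diag -!mulmxA -row_permE mul_diag_mx.
by rewrite !mxE.
Qed.

Lemma mx_equiv_rectangle_gt0 n (Z Z' : 'M[int]_n) :
  (forall i j, 0 < Z i j) -> mx_equiv Z Z' ->
  forall i1 i2 j1 j2, 0 < Z' i1 j1 * Z' i1 j2 * Z' i2 j1 * Z' i2 j2.
Proof.
move=> Z_gt0 [_ [_ [[s [d [d_sign ->]]] [[t [e [e_sign ->]]] ->]]]] i1 i2 j1 j2.
rewrite !signed_perm_mulmxE.
have sqr_sign (x : int) : x = 1 \/ x = -1 -> x * x = 1 by case=> ->.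
set a1 := (t^-1 j1)%g; set a2 := (t^-1 j2)%g.
have -> : forall x11 x12 x21 x22 : int,
    d 0 i1 * x11 * e 0 a1 * (d 0 i1 * x12 * e 0 a2)
    * (d 0 i2 * x21 * e 0 a1) * (d 0 i2 * x22 * e 0 a2)
  = (d 0 i1 * d 0 i1) * (d 0 i2 * d 0 i2) * (e 0 a1 * e 0 a1) * (e 0 a2 * e 0 a2)
    * (x11 * x12 * x21 * x22) by move=> *; ring.
rewrite (sqr_sign _ (d_sign i1)) (sqr_sign _ (d_sign i2)).
by rewrite (sqr_sign _ (e_sign a1)) (sqr_sign _ (e_sign a2)) !mul1r !mulr_gt0.
Qed.

Lemma mulmx1_witness n (A B : 'M[int]_n) k i0 j0 :
  A *m B = 1%:M -> (forall i j, A i j != 0) -> (forall i j, B i j != 0) ->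
  (forall i j, `|A i j| <= k)%N -> (forall i j, `|B i j| <= k)%N ->
  `|A i0 j0|%N = k ->
  [/\ unimodular A, zerofree A, invmx A = B & mxnorm (row_mx A (invmx A)) = k].
Proof.
move=> AB A_nz B_nz A_le B_le Ak; have invA := mulmx1_invmx AB.
split; first exact: mulmx1_unimodular AB.
- by split; [case: (mulmx1_unit AB) | rewrite invA].
- exact: invA.
rewrite mxnorm_row_mx invA (mxnorm_eq A_le Ak).
by apply/maxn_idPl/mxnorm_leP.
Qed.

Ltac mx4_entrywise :=
  try apply/matrixP;
  try (case=> [[|[|[|[|?]]]] ?] //; case=> [[|[|[|[|?]]]] ?] //);
  rewrite ?mxE ?big_ord_recr ?big_ord0 /=;
  unfold Mex, Mex_inv, Mtil, Mtil_inv, mx4_of_list; rewrite ?mxE.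

Lemma Mex_mulmx : Mex *m Mex_inv = 1%:M.
Proof. by mx4_entrywise. Qed.

Lemma Mtil_mulmx : Mtil *m Mtil_inv = 1%:M.
Proof. by mx4_entrywise. Qed.

Lemma Mex_Mtil_not_equiv : ~ mx_equiv Mex Mtil.
Proof.
have Mex_gt0 : forall i j, 0 < Mex i j by mx4_entrywise.
move/(mx_equiv_rectangle_gt0 Mex_gt0)/(_ 0 1 0 1).
by rewrite /Mtil /mx4_of_list !mxE.
Qed.

Lemma Mex_witness : [/\ unimodular Mex, zerofree Mex, invmx Mex = Mex_inv
  & mxnorm (row_mx Mex (invmx Mex)) = 2%N].
Proof.
by apply: (@mulmx1_witness _ _ _ 2 0 3 Mex_mulmx); mx4_entrywise.
Qed.

Lemma Mtil_witness : [/\ unimodular Mtil, zerofree Mtil, invmx Mtil = Mtil_inv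
  & mxnorm (row_mx Mtil (invmx Mtil)) = 2%N].
Proof.
by apply: (@mulmx1_witness _ _ _ 2 0 3 Mtil_mulmx); mx4_entrywise.
Qed.

Theorem mainTheorem10 :
  (forall M : 'M[int]_4, unimodular M -> zerofree M ->
     (2 <= mxnorm (row_mx M (invmx M)))%N)
  /\ (unimodular Mex /\ zerofree Mex /\ invmx Mex = Mex_inv
      /\ mxnorm (row_mx Mex (invmx Mex)) = 2%N)
  /\ (unimodular Mtil /\ zerofree Mtil /\ invmx Mtil = Mtil_inv
      /\ mxnorm (row_mx Mtil (invmx Mtil)) = 2%N)
  /\ ~ mx_equiv Mex Mtil.
Proof.
have [Mex_unimod Mex_zf Mex_inv_eq Mex_norm] := Mex_witness.
have [Mtil_unimod Mtil_zf Mtil_inv_eq Mtil_norm] := Mtil_witness.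
split; first by move=> M _; apply: zerofree_mxnorm_ge2.
by split; [|split; [|exact: Mex_Mtil_not_equiv]].
Qed.
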